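(* Let $K$ be a finite set (of origin–destination pairs) and, for each $k \in K$, let $T_k$ be a finite nonempty set (of departure time options) and $Q_k > 0$ a given demand. A flow vector is $\mathbf{Q} = \{q_k(t) : k \in K, t \in T_k\}$, and for each flow vector let $C_k(t) = C_k(t;\mathbf{Q}) \in \mathbb{R}$ be given average travel costs, an arbitrary function of $\mathbf{Q}$. Consider the nonlinear mathematical program (NMP) in the variables $\mathbf{Q}$ and $\boldsymbol{\rho} = \{\rho_k : k \in K\}$: $$\min_{\mathbf{Q},\boldsymbol{\rho}} \ \zeta(\mathbf{Q},\boldsymbol{\rho}) = \sum_{k \in K}\sum_{t \in T_k} \big(C_k(t;\mathbf{Q}) - \rho_k\big)\, q_k(t)$$ subject to $C_k(t;\mathbf{Q}) - \rho_k \ge 0$ for all $k \in K, t \in T_k$; $q_k(t) \ge 0$ for all $k\in K, t \in T_k$; $Q_k - \sum_{t \in T_k} q_k(t) = 0$ for all $k \in K$; and $\rho_k \ge 0$ for all $k \in K$. If $(\mathbf{Q}^*, \boldsymbol{\rho}^* )$ is an optimal solution of this NMP, then for every $k \in K$, $$\rho_k^* = \min_{t \in T_k} C_k(t;\mathbf{Q}^* ).$$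
   Context: This is a departure-time user-equilibrium model for public transport: $K$ is the set of origin–destination (OD) pairs, $T_k$ the set of train departure times available at the origin of OD pair $k$, $Q_k$ the total demand of OD pair $k$, $q_k(t)$ the number of users of OD pair $k$ choosing departure time $t$, and $C_k(t;\mathbf{Q})$ the average generalized travel cost of option $(k,t)$ under flow distribution $\mathbf{Q}$ (in the paper computed by a network-loading simulation; here it may be any function of $\mathbf{Q}$). The variables $\rho_k$ are auxiliary per-OD cost levels. *)

From mathcomp Require Import all_boot all_order all_algebra.
Unset Printing Implicit Defensive.
Import Order.TTheory GRing.Theory Num.Theory.
Local Open Scope ring_scope.

Definition flow (R : Type) (K : finType) (T : K -> finType) := forall k : K, T k -> R.

(* Minimum of f over a finite type (the value 0 is only a dummy for the empty type,
   which never occurs below since every T_k is assumed nonempty). *)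
Definition minf (R : realFieldType) (X : finType) (f : X -> R) : R :=
  match [pick t : X] with
  | Some t0 => \big[Num.min/f t0]_(t : X) f t
  | None => 0
  end.

Section NMP.
Variables (R : realFieldType) (K : finType) (T : K -> finType).
Variable (Qd : K -> R).
Variable (C : flow R K T -> forall k : K, T k -> R).

Definition zeta (Q : flow R K T) (rho : K -> R) : R :=
  \sum_(k : K) \sum_(t : T k) (C Q k t - rho k) * Q k t.

Definition feasible (Q : flow R K T) (rho : K -> R) : Prop :=
  [/\ (forall k t, 0 <= C Q k t - rho k),
      (forall k t, 0 <= Q k t),
      (forall k, Qd k - \sum_(t : T k) Q k t = 0)
    & (forall k, 0 <= rho k)].

Definition optimal (Q : flow R K T) (rho : K -> R) : Prop :=
  feasible Q rho /\
  (forall Q' rho', feasible Q' rho' -> zeta Q rho <= zeta Q' rho').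
End NMP.

From mathcomp Require Import all_boot all_order all_algebra.
Import Order.TTheory GRing.Theory Num.Theory.
From mathcomp Require Import ring.
Local Open Scope ring_scope.

Local Arguments minf {R X}.
Local Arguments zeta {R K T}.
Local Arguments feasible {R K T}.
Local Arguments optimal {R K T}.

(* Feasibility forces rho_k <= C_k(t) for every t, so rho_k is at most the
   minimum cost.  Conversely, if rho_k were below the minimum, raising it to
   the minimum keeps the point feasible and, because the flows of OD pair k sum
   to Q_k > 0, lowers zeta by (min - rho_k) Q_k: this contradicts optimality. *)

Section MinOverFinType.
Context {R : realFieldType} {X : finType} (f : X -> R).

Lemma minf_le t : minf f <= f t.
Proof.
rewrite /minf; case: pickP => [t0 _|/(_ t)//].
by rewrite (bigD1 t) //= ge_min lexx.
Qed.

Lemma minf_attained : (0 < #|X|)%N -> exists t, minf f = f t.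
Proof.
case/card_gt0P => x _; rewrite /minf; case: pickP => [t0 _|/(_ x)//].
apply: (big_ind (fun y => exists t, y = f t)); first by exists t0.
- by move=> a b [ta ->] [tb ->]; rewrite minElt; case: ifP => _; eauto.
- by move=> t _; exists t.
Qed.

End MinOverFinType.

Section NMPOptimality.
Context {R : realFieldType} {K : finType} {T : K -> finType}.
Context {Qd : K -> R} {C : flow R K T -> forall k : K, T k -> R}.

Lemma zeta_update (Q : flow R K T) (rho : K -> R) k r :
  zeta C Q [eta rho with k |-> r] =
  zeta C Q rho - (r - rho k) * \sum_(t : T k) Q k t.
Proof.
rewrite /zeta (bigD1 k) //= [in RHS](bigD1 k) //= eqxx.
have -> : \sum_(i | i != k) \sum_t (C Q i t - [eta rho with k |-> r] i) * Q i t
        = \sum_(i | i != k) \sum_t (C Q i t - rho i) * Q i t.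
  by apply: eq_bigr => i /negbTE /= ->.
rewrite mulr_sumr addrAC -sumrB.
by congr (_ + _); apply: eq_bigr => t _; ring.
Qed.

Lemma feasible_update {Q : flow R K T} {rho : K -> R} {k r} :
  feasible Qd C Q rho -> rho k <= r -> (forall t, r <= C Q k t) ->
  feasible Qd C Q [eta rho with k |-> r].
Proof.
move=> [hC hQ hS hrho] le_rho_r le_r_C; split=> //= [k' t | k'].
- by case: eqP => [?|_]; subst; rewrite subr_ge0 ?le_r_C // -subr_ge0.
- by case: eqP => // _; exact: le_trans (hrho k) le_rho_r.
Qed.

Lemma optimal_rho_maximal {Q : flow R K T} {rho : K -> R} {k r} :
  optimal Qd C Q rho -> 0 < Qd k -> rho k <= r -> (forall t, r <= C Q k t) ->
  r <= rho k.
Proof.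
move=> [feas opt] Qd_gt0 le_rho_r le_r_C; rewrite leNgt; apply/negP => lt_rho_r.
have [_ _ hS _] := feas.
have sumQ : \sum_(t : T k) Q k t = Qd k by apply/eqP; rewrite eq_sym -subr_eq0 hS.
have := opt _ _ (feasible_update feas le_rho_r le_r_C).
by rewrite zeta_update sumQ lerDl oppr_ge0 leNgt mulr_gt0 // subr_gt0.
Qed.

End NMPOptimality.

Theorem proposition2 (R : realFieldType) (K : finType) (T : K -> finType)
    (Qd : K -> R) (C : flow R K T -> forall k : K, T k -> R)
    (hT : forall k : K, (0 < #|T k|)%N)
    (hQd : forall k : K, 0 < Qd k)
    (Qs : flow R K T) (rhos : K -> R) :
  @optimal R K T Qd C Qs rhos ->
  forall k : K, rhos k = @minf R (T k) (C Qs k).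
Proof.
move=> opt k; have [[hC _ _ _] _] := opt.
have [t0 min_t0] := minf_attained (C Qs k) (hT k).
have le_rho_min : rhos k <= minf (C Qs k) by rewrite min_t0 -subr_ge0.
apply/le_anti; rewrite le_rho_min.
exact: optimal_rho_maximal opt (hQd k) le_rho_min (minf_le _).
Qed.
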